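(* Let $\mathcal{N}\subseteq\mathcal{M}$ be unital $C^*$-algebras with a common unit, and let $p_1,\ldots,p_n\in\mathcal{N}$ be mutually orthogonal projections with $p_1+\cdots+p_n=1$. Let $b\in\mathcal{M}$ and suppose that for each $k$ there exist $x_k\in p_k\mathcal{N}p_k$ and $y_k\in p_k\mathcal{M}p_k$ with $p_kbp_k=x_ky_k-y_kx_k$. Then there exist $d\in\mathcal{N}$ and $z\in\mathcal{M}$ with $b=dz-zd$. *)

From mathcomp Require Import all_boot all_algebra.
From mathcomp Require Import complex reals.
Set Implicit Arguments. Unset Strict Implicit. Unset Printing Implicit Defensive.
Import GRing.Theory Num.Theory.
Local Open Scope ring_scope.
Local Open Scope complex_scope.

Definition nconverges (R : realType) (A : lmodType R[i]) (nrm : A -> R)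
    (u : nat -> A) (l : A) : Prop :=
  forall e : R, 0 < e -> exists N : nat, forall n : nat, (N <= n)%N -> nrm (u n - l) < e.

Definition ncauchy (R : realType) (A : lmodType R[i]) (nrm : A -> R)
    (u : nat -> A) : Prop :=
  forall e : R, 0 < e -> exists N : nat, forall m n : nat,
    (N <= m)%N -> (N <= n)%N -> nrm (u m - u n) < e.

Definition is_Cstar_algebra (R : realType) (A : algType R[i])
    (star : A -> A) (nrm : A -> R) : Prop :=
  (forall x, star (star x) = x) /\
  (forall x y, star (x + y) = star x + star y) /\
  (forall (c : R[i]) x, star (c *: x) = c^* *: star x) /\
  (forall x y, star (x * y) = star y * star x) /\
  (forall x, 0 <= nrm x) /\ (forall x, nrm x = 0 -> x = 0) /\
  (forall x y, nrm (x + y) <= nrm x + nrm y) /\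
  (forall (c : R[i]) x, (nrm (c *: x))%:C = `|c| * (nrm x)%:C) /\
  (forall x y, nrm (x * y) <= nrm x * nrm y) /\
  (forall x, nrm (star x * x) = nrm x ^+ 2) /\
  (forall u : nat -> A, ncauchy nrm u -> exists l, nconverges nrm u l).

Definition is_unital_Cstar_subalgebra (R : realType) (A : algType R[i])
    (star : A -> A) (nrm : A -> R) (N : A -> Prop) : Prop :=
  N 1 /\
  (forall x y, N x -> N y -> N (x + y)) /\
  (forall (c : R[i]) x, N x -> N (c *: x)) /\
  (forall x y, N x -> N y -> N (x * y)) /\
  (forall x, N x -> N (star x)) /\
  (forall (u : nat -> A) l, (forall n, N (u n)) -> nconverges nrm u l -> N l).

Definition is_projection (R : realType) (A : algType R[i]) (star : A -> A)
    (p : A) : Prop := star p = p /\ p * p = p.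

(* Put d := sum_k (x_k + lam_k p_k),
   which lies in N, with real weights lam_k spaced further apart than
   4 max_k ||x_k||. The diagonal blocks of b are [d, y_k], since the scalar part
   of d commutes with y_k. For j <> k, d acts on the corner p_j M p_k by
   w |-> (lam_j - lam_k) w + x_j w - w x_k, a perturbation of a large multiple
   of the identity; a Neumann-series (contraction) argument inverts it, so the
   block p_j b p_k equals [d, W_jk] for some W_jk in that corner.
   Summing over all blocks gives b = [d, sum_k y_k + sum_(j <> k) W_jk]. *)

From mathcomp Require Import all_boot all_algebra order.
From mathcomp Require Import complex reals lra.
From Stdlib Require Import ClassicalEpsilon.
Import Order.TTheory GRing.Theory Num.Theory.
Set Implicit Arguments. Unset Strict Implicit. Unset Printing Implicit Defensive.
Local Open Scope ring_scope.
Local Open Scope complex_scope.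

Definition corner (M : pzRingType) (p r w : M) : Prop := p * w = w /\ w * r = w.

Lemma corner_mul (M : pzRingType) (p r u : M) :
  p * p = p -> r * r = r -> corner p r (p * u * r).
Proof. by move=> pp rr; split; [rewrite !mulrA pp | rewrite -!mulrA rr]. Qed.

Lemma commutator_sumr (M : pzRingType) (d : M) (I : finType) (P : pred I) (F : I -> M) :
  d * (\sum_(i | P i) F i) - (\sum_(i | P i) F i) * d = \sum_(i | P i) (d * F i - F i * d).
Proof. by rewrite mulr_sumr mulr_suml -sumrB. Qed.

Section OrthogonalDecomposition.
Variables (K : pzRingType) (M : algType K) (n : nat) (p : 'I_n -> M).
Hypotheses (p_idem : forall k, p k * p k = p k)
  (p_orth : forall j k, j != k -> p j * p k = 0) (p_sum : \sum_k p k = 1).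

Lemma mulr_sum_orthl (F : 'I_n -> M) j w :
  (forall i, F i * p i = F i) -> p j * w = w -> (\sum_i F i) * w = F j * w.
Proof.
move=> Fp pw; rewrite mulr_suml (bigD1 j) //= big1 ?addr0 // => i ij.
by rewrite -(Fp i) -pw mulrA -[F i * p i * p j]mulrA p_orth // mulr0 mul0r.
Qed.

Lemma mulr_sum_orthr (F : 'I_n -> M) k w :
  (forall i, p i * F i = F i) -> w * p k = w -> w * (\sum_i F i) = w * F k.
Proof.
move=> pF wp; rewrite mulr_sumr (bigD1 k) //= big1 ?addr0 // => i ik.
by rewrite -(pF i) -wp -mulrA [p k * (p i * F i)]mulrA p_orth 1?eq_sym // mul0r mulr0.
Qed.

Lemma block_decomposition (b : M) :
  b = \sum_j p j * b * p j + \sum_j \sum_(k | k != j) p j * b * p k.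
Proof.
rewrite -big_split /= -{1}[b]mul1r -{1}[b]mulr1 -p_sum mulr_suml.
apply: eq_bigr => j _; rewrite mulr_sumr (bigD1 j) //= mulrDr mulr_sumr mulrA.
by congr (_ + _); apply: eq_bigr => k _; rewrite mulrA.
Qed.

Lemma commutator_from_blocks (b : M) (c : 'I_n -> K) (x y : 'I_n -> M)
    (W : 'I_n -> 'I_n -> M) :
  (forall k, corner (p k) (p k) (x k)) -> (forall k, corner (p k) (p k) (y k)) ->
  (forall j k, j != k -> corner (p j) (p k) (W j k)) ->
  (forall k, p k * b * p k = x k * y k - y k * x k) ->
  (forall j k, j != k ->
     (c j - c k) *: W j k + x j * W j k - W j k * x k = p j * b * p k) ->
  let d := \sum_k (x k + c k *: p k) in
  let z := \sum_k y k + \sum_j \sum_(k | k != j) W j k in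
  b = d * z - z * d.
Proof.
move=> x_cor y_cor W_cor b_diag b_off d z.
pose e k := x k + c k *: p k.
have e_r k : e k * p k = e k.
  by rewrite mulrDl -scalerAl p_idem (proj2 (x_cor k)).
have e_l k : p k * e k = e k.
  by rewrite mulrDr -scalerAr p_idem (proj1 (x_cor k)).
have d_l j w : p j * w = w -> d * w = e j * w by apply: mulr_sum_orthl.
have d_r k w : w * p k = w -> w * d = w * e k by apply: mulr_sum_orthr.
have comm_y k : d * y k - y k * d = p k * b * p k.
  have [yl yr] := y_cor k.
  rewrite (d_l k) // (d_r k) // mulrDl mulrDr -scalerAl -scalerAr yl yr b_diag.
  by rewrite opprD addrACA subrr addr0.
have comm_W j k : j != k -> d * W j k - W j k * d = p j * b * p k.
  move=> jk; have [Wl Wr] := W_cor j k jk.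
  rewrite (d_l j) // (d_r k) // mulrDl mulrDr -scalerAl -scalerAr Wl Wr -b_off // scalerBl.
  by rewrite opprD addrACA addrC addrA.
rewrite {1}(block_decomposition b) /z mulrDr mulrDl opprD addrACA !commutator_sumr.
congr (_ + _); first by apply: eq_bigr => k _; rewrite comm_y.
apply: eq_bigr => j _; rewrite commutator_sumr.
by apply: eq_bigr => k kj; rewrite comm_W // eq_sym.
Qed.

End OrthogonalDecomposition.

Lemma expr_mulSn_le1 (R : realFieldType) (q : R) (N : nat) :
  0 <= q -> q <= 2^-1 -> q ^+ N * N.+1%:R <= 1.
Proof.
move=> q_ge0 q_le; elim: N => [|N IH]; first by rewrite expr0 mul1r.
have qN_ge0 : 0 <= q ^+ N by apply: exprn_ge0.
have N_ge0 : (0 : R) <= N%:R by apply: ler0n.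
rewrite exprS -mulrA -[N.+2]addn1 natrD.
rewrite -[N.+1]addn1 natrD in IH *.
nra.
Qed.

Lemma dist_nat_scale_ge (R : realDomainType) (K : R) (j k : nat) :
  0 <= K -> j != k -> K <= `|j%:R * K - k%:R * K|.
Proof.
move=> K_ge0 jk; rewrite -mulrBl normrM (ger0_norm K_ge0) -[leLHS]mul1r.
apply: ler_wpM2r => //; rewrite ler_normr.
case: (ltngtP j k) jk => [jk | kj | ->]; rewrite ?eqxx // => _; apply/orP.
- by right; rewrite opprB lerBrDr addrC natr1 ler_nat.
- by left; rewrite lerBrDr addrC natr1 ler_nat.
Qed.

Section BanachAlgebra.
Variables (R : realType) (M : algType R[i]) (nrm : M -> R).
Hypotheses (nrm_ge0 : forall x, 0 <= nrm x)
  (nrm_eq0 : forall x, nrm x = 0 -> x = 0)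
  (nrm_triangle : forall x y, nrm (x + y) <= nrm x + nrm y)
  (nrmZ : forall (c : R[i]) x, (nrm (c *: x))%:C = `|c| * (nrm x)%:C)
  (nrm_submul : forall x y, nrm (x * y) <= nrm x * nrm y)
  (nrm_complete : forall u, ncauchy nrm u -> exists l, nconverges nrm u l).

Lemma nrmZ_real (r : R) (x : M) : nrm (r%:C *: x) = `|r| * nrm x.
Proof.
have := nrmZ r%:C x.
by rewrite normc_def /= expr0n addr0 sqrtr_sqr -rmorphM => /complexI.
Qed.

Lemma nrm0 : nrm 0 = 0.
Proof. by have := nrmZ_real 0 0; rewrite scaler0 normr0 mul0r. Qed.

Lemma nrmN (x : M) : nrm (- x) = nrm x.
Proof. by have := nrmZ_real (-1) x; rewrite normrN normr1 mul1r rmorphN1 scaleN1r. Qed.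

Lemma nrm_small_eq0 (w : M) : (forall e : R, 0 < e -> nrm w < e) -> w = 0.
Proof.
move=> small; apply: nrm_eq0; have := nrm_ge0 w.
by rewrite le_eqVlt => /orP[/eqP <- // | /small]; rewrite ltxx.
Qed.

Lemma ncauchy_geometric (u : nat -> M) (q C : R) :
  0 <= q -> q <= 2^-1 -> 0 <= C ->
  (forall m, nrm (u m.+1 - u m) <= q ^+ m * C) -> ncauchy nrm u.
Proof.
move=> q_ge0 q_le C_ge0 step.
have tail n k : nrm (u (n + k)%N - u n) <= 2 * C * (q ^+ n - q ^+ (n + k)%N).
  elim: k => [|k IH]; first by rewrite addn0 !subrr nrm0 mulr0.
  rewrite addnS -(subrK (u (n + k)%N) (u _)) -addrA.
  apply: le_trans (nrm_triangle _ _) _.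
  apply: le_trans (lerD (step _) IH) _.
  have : 0 <= (C * q ^+ (n + k)%N) * (1 - 2 * q).
    by apply: mulr_ge0; [apply: mulr_ge0 => //; apply: exprn_ge0 | lra].
  rewrite exprS; nra.
have tail_le n m : (n <= m)%N -> nrm (u m - u n) <= 2 * C * q ^+ n.
  move=> /subnKC <-; apply: le_trans (tail _ _) _.
  have : 0 <= q ^+ (n + (m - n))%N by apply: exprn_ge0.
  nra.
move=> eps eps_gt0; pose N := Num.Def.trunc (2 * C / eps).
have qN_lt : 2 * C * q ^+ N < eps.
  have N_gt : 2 * C < eps * N.+1%:R.
    by rewrite [eps * _]mulrC -ltr_pdivrMr //; apply: truncnS_gt.
  have := expr_mulSn_le1 N q_ge0 q_le.
  have : 0 <= q ^+ N by apply: exprn_ge0.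
  have : (0 : R) < N.+1%:R by rewrite ltr0n.
  nra.
have qk_le k : (N <= k)%N -> 2 * C * q ^+ k <= 2 * C * q ^+ N.
  by move=> Nk; apply: ler_wpM2l; [lra | apply: ler_wiXn2l => //; lra].
exists N => m n Nm Nn; case: (leqP n m) => [nm | /ltnW mn].
- exact: le_lt_trans (tail_le _ _ nm) (le_lt_trans (qk_le _ Nn) qN_lt).
- rewrite -nrmN opprB.
  exact: le_lt_trans (tail_le _ _ mn) (le_lt_trans (qk_le _ Nm) qN_lt).
Qed.

Lemma contraction_fixpoint (S : M -> M) (q : R) (c : M) :
  0 <= q -> q <= 2^-1 ->
  (forall x y, S (x - y) = S x - S y) -> (forall x, nrm (S x) <= q * nrm x) ->
  exists z, z = c + S z.
Proof.
move=> q_ge0 q_le SB S_le.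
have S0 : S 0 = 0 by have := SB 0 0; rewrite !subrr.
pose u := fix u m := if m is m'.+1 then c + S (u m') else 0.
have uS m : u m.+1 = c + S (u m) by [].
have step m : nrm (u m.+1 - u m) <= q ^+ m * nrm c.
  elim: m => [|m IH]; first by rewrite uS /= S0 addr0 subr0 expr0 mul1r.
  rewrite !uS opprD addrACA subrr add0r -SB.
  by apply: le_trans (S_le _) _; rewrite exprS -mulrA ler_wpM2l.
have [z u_cvg] := nrm_complete (ncauchy_geometric q_ge0 q_le (nrm_ge0 c) step).
exists z; apply/eqP; rewrite -subr_eq0; apply/eqP; apply: nrm_small_eq0 => e e_gt0.
have [N uN] := u_cvg (e / 2) ltac:(by rewrite divr_gt0).
have -> : z - (c + S z) = - (u N.+1 - z) + S (u N - z).
  by rewrite SB uS opprB !opprD !addrA subrK.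
apply: le_lt_trans (nrm_triangle _ _) _; rewrite nrmN.
have := uN N.+1 (leqnSn _); have := uN N (leqnn _).
have := S_le (u N - z); have := nrm_ge0 (u N - z).
nra.
Qed.

Lemma sylvester_solvable (a e c : M) (mu : R) :
  mu != 0 -> 2 * (nrm a + nrm e) <= `|mu| ->
  exists z, mu%:C *: z + a * z - z * e = c.
Proof.
move=> mu_neq0 mu_ge.
have mu_gt0 : 0 < `|mu| by rewrite normr_gt0.
pose S x := (- mu^-1)%:C *: (a * x - x * e).
pose q := (nrm a + nrm e) / `|mu|.
have q_ge0 : 0 <= q by rewrite divr_ge0 // addr_ge0.
have q_le : q <= 2^-1 by rewrite ler_pdivrMr //; lra.
have SB x y : S (x - y) = S x - S y.
  rewrite /S -scalerBr mulrBr mulrBl; congr (_ *: _).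
  rewrite -!addrA; congr (_ + _).
  by rewrite !opprB addrCA [RHS]addrCA [- (a * y) + _]addrC.
have S_le x : nrm (S x) <= q * nrm x.
  rewrite nrmZ_real normrN normfV.
  have : nrm (a * x - x * e) <= (nrm a + nrm e) * nrm x.
    apply: le_trans (nrm_triangle _ _) _; rewrite nrmN mulrDl.
    by apply: lerD; [|rewrite mulrC]; apply: nrm_submul.
  move=> le_xe; rewrite /q mulrAC [_ * _ / _]mulrC.
  by apply: ler_wpM2l le_xe; rewrite invr_ge0.
have [z z_fix] := contraction_fixpoint (mu^-1%:C *: c) q_ge0 q_le SB S_le.
exists z; rewrite -addrA {1}z_fix scalerDr /S !scalerA -!rmorphM mulrN mulfV //.
by rewrite rmorph1 rmorphN1 scale1r scaleN1r subrK.
Qed.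

Lemma corner_sylvester (p r a e c : M) (mu : R) :
  p * p = p -> r * r = r -> corner p p a -> corner r r e ->
  mu != 0 -> 2 * (nrm a + nrm e) <= `|mu| ->
  exists w, corner p r w /\ mu%:C *: w + a * w - w * e = p * c * r.
Proof.
move=> pp rr [pa ap] [re er] mu_neq0 mu_ge.
have [w0 w0_eq] := sylvester_solvable c mu_neq0 mu_ge.
exists (p * w0 * r); split; first exact: corner_mul.
rewrite -w0_eq mulrBr mulrDr mulrBl mulrDl -scalerAr -scalerAl.
congr (_ + _ - _); first by rewrite !mulrA pa ap.
by rewrite -!mulrA re er.
Qed.

Lemma offdiag_sylvester_solutions n (p x : 'I_n -> M) (b : M) :
  (forall k, p k * p k = p k) -> (forall k, corner (p k) (p k) (x k)) ->
  exists (c : 'I_n -> R[i]) (W : 'I_n -> 'I_n -> M), forall j k, j != k ->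
    corner (p j) (p k) (W j k) /\
    (c j - c k) *: W j k + x j * W j k - W j k * x k = p j * b * p k.
Proof.
move=> pp x_cor; pose S := \sum_k nrm (x k).
have S_ge0 : 0 <= S by apply: sumr_ge0.
have x_le j : nrm (x j) <= S by rewrite /S (bigD1 j) //= lerDl; apply: sumr_ge0.
pose K := 1 + 4 * S; pose lam (k : 'I_n) := k%:R * K.
have /ClassicalEpsilon.choice [W W_spec] : forall jk : 'I_n * 'I_n, exists w,
    jk.1 != jk.2 -> corner (p jk.1) (p jk.2) w /\
      (lam jk.1 - lam jk.2)%:C *: w + x jk.1 * w - w * x jk.2 = p jk.1 * b * p jk.2.
  case=> j k /=; case: (eqVneq j k) => [_ | jk]; first by exists 0.
  have K_le : K <= `|lam j - lam k| by apply: dist_nat_scale_ge jk; rewrite /K; lra.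
  have lam_neq : lam j - lam k != 0.
    by rewrite -normr_gt0; apply: lt_le_trans K_le; rewrite /K; lra.
  have x_small : 2 * (nrm (x j) + nrm (x k)) <= `|lam j - lam k|.
    by apply: le_trans K_le; have := x_le j; have := x_le k; rewrite /K; lra.
  have [w w_spec] := corner_sylvester b (pp j) (pp k) (x_cor j) (x_cor k) lam_neq x_small.
  by exists w.
exists (fun k => (lam k)%:C), (fun j k => W (j, k)) => j k jk.
by rewrite /= -rmorphB; exact: (W_spec (j, k)).
Qed.

End BanachAlgebra.

Unset Implicit Arguments.

Theorem lemma3p15 (R : realType) (M : algType R[i]) (star : M -> M)
  (nrm : M -> R) (N : M -> Prop)
  (hM : is_Cstar_algebra star nrm)
  (hN : is_unital_Cstar_subalgebra star nrm N)
  (n : nat) (p : 'I_n -> M)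
  (hpN : forall k, N (p k))
  (hproj : forall k, is_projection star (p k))
  (horth : forall j k, j != k -> p j * p k = 0)
  (hsum : \sum_(k < n) p k = 1)
  (b : M)
  (hb : forall k, exists x y : M,
      (exists u, N u /\ x = p k * u * p k) /\
      (exists v, y = p k * v * p k) /\
      p k * b * p k = x * y - y * x) :
  exists d z : M, N d /\ b = d * z - z * d.
Proof.
case: hM => _ [_ [_ [_ [nrm_ge0 [nrm_eq0 [nrm_tri [nrmZ [nrm_mul [_ nrm_cpl]]]]]]]]].
case: hN => N1 [N_add [N_scale [N_mul _]]].
have pp k : p k * p k = p k by case: (hproj k).
have [x hx] := ClassicalEpsilon.choice _ hb.
have [y hxy] := ClassicalEpsilon.choice _ hx.
have x_N k : N (x k).
  have [[u [Nu ->]] _] := hxy k.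
  by apply: (N_mul); [apply: (N_mul)|]; rewrite ?hpN.
have x_cor k : corner (p k) (p k) (x k).
  by have [[u [_ ->]] _] := hxy k; apply: corner_mul.
have y_cor k : corner (p k) (p k) (y k).
  by have [_ [[v ->] _]] := hxy k; apply: corner_mul.
have b_diag k : p k * b * p k = x k * y k - y k * x k by have [_ [_ ->]] := hxy k.
have [c [W W_spec]] := offdiag_sylvester_solutions nrm_ge0 nrm_eq0 nrm_tri nrmZ
  nrm_mul nrm_cpl b pp x_cor.
exists (\sum_k (x k + c k *: p k)),
  (\sum_k y k + \sum_j \sum_(k | k != j) W j k); split.
  apply: big_ind => // [|k _]; last by apply: N_add => //; apply: N_scale.
  by rewrite -(scale0r (1 : M)); apply: N_scale.
by apply: commutator_from_blocks => // j k jk; case: (W_spec j k jk).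
Qed.
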